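(* Let $\mathcal V$ be a variety with a difference term, $A\in\mathcal V$, and $\alpha\in\operatorname{Con}A$ central, i.e. $[\alpha,1_A]=0$. Then \[A(\alpha)/\Delta_{\alpha\alpha}\cong A(\alpha)/\Delta_{\alpha1}\times A/\alpha.\]
   Context: All algebras are in the sense of universal algebra. For $\alpha,\beta\in\operatorname{Con}A$, $[\alpha,\beta]$ is the term-condition (TC) commutator; $1_A$ is the total relation. $A(\alpha)=\{(x,y)\in A\times A:(x,y)\in\alpha\}$ is $\alpha$ viewed as a subalgebra of $A\times A$; $\Delta_{\alpha\beta}$ is the congruence of $A(\alpha)$ generated by $\{((u,u),(v,v)):(u,v)\in\beta\}$. A difference term for $\mathcal V$ is a ternary term $d$ such that for every $A\in\mathcal V$, $\theta\in\operatorname{Con}A$, $(a,b)\in\theta$: $d(a,a,b)=b$ and $(d(a,b,b),a)\in[\theta,\theta]$. *)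

From mathcomp Require Import all_boot.
From Stdlib Require Import ClassicalEpsilon.
Set Implicit Arguments. Unset Strict Implicit. Unset Printing Implicit Defensive.

Record signature := Signature { op : Type; arity : op -> nat }.

Record algebra (S : signature) := Algebra {
  carrier :> Type;
  interp : forall f : op S, ('I_(arity f) -> carrier) -> carrier }.
Arguments interp {S} _ _ _.

Definition compatible S (A : algebra S) (R : A -> A -> Prop) :=
  forall (f : op S) (a b : 'I_(arity f) -> A),
    (forall i, R (a i) (b i)) -> R (interp A f a) (interp A f b).

Definition is_congruence S (A : algebra S) (R : A -> A -> Prop) :=
  [/\ (forall x, R x x), (forall x y, R x y -> R y x),
      (forall x y z, R x y -> R y z -> R x z) & compatible R].

Definition total_rel (T : Type) : T -> T -> Prop := fun _ _ => True.

Definition Cg S (A : algebra S) (X : A -> A -> Prop) : A -> A -> Prop :=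
  fun x y => forall R, is_congruence R -> (forall u v, X u v -> R u v) -> R x y.

Inductive term (S : signature) (X : Type) : Type :=
  | Var : X -> term S X
  | App : forall f : op S, ('I_(arity f) -> term S X) -> term S X.
Arguments Var {S X} x.
Arguments App {S X} f ts.

Fixpoint eval S (A : algebra S) X (v : X -> A) (t : term S X) : A :=
  match t with
  | Var x => v x
  | App f ts => interp A f (fun i => eval v (ts i))
  end.

Definition satisfies S (A : algebra S) (s t : term S nat) :=
  forall v : nat -> A, eval v s = eval v t.

Definition is_variety S (V : algebra S -> Prop) :=
  exists E : term S nat -> term S nat -> Prop,
    forall A : algebra S, V A <-> (forall s t, E s t -> satisfies A s t).

Definition sum_asg (T : Type) (a c : nat -> T) : nat + nat -> T :=
  fun z => match z with inl i => a i | inr j => c j end.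

Definition centralizes S (A : algebra S) (alpha beta delta : A -> A -> Prop) :=
  forall (t : term S (nat + nat)) (a b c d : nat -> A),
    (forall i, alpha (a i) (b i)) -> (forall j, beta (c j) (d j)) ->
    delta (eval (sum_asg a c) t) (eval (sum_asg a d) t) ->
    delta (eval (sum_asg b c) t) (eval (sum_asg b d) t).

Definition commutator S (A : algebra S) (alpha beta : A -> A -> Prop) : A -> A -> Prop :=
  fun x y => forall delta, is_congruence delta -> centralizes alpha beta delta -> delta x y.

Definition asg3 (T : Type) (x y z : T) : nat -> T :=
  fun i => match i with 0 => x | 1 => y | _ => z end.

Definition is_difference_term S (V : algebra S -> Prop) (d : term S nat) :=
  forall A : algebra S, V A ->
  forall theta : A -> A -> Prop, is_congruence theta ->
  forall a b : A, theta a b ->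
    eval (asg3 a a b) d = b /\ commutator theta theta (eval (asg3 a b b) d) a.

Definition prod_alg S (A B : algebra S) : algebra S :=
  @Algebra S (A * B)%type
    (fun f a => (interp A f (fun i => (a i).1), interp B f (fun i => (a i).2))).

(* A(alpha): alpha as a subalgebra of A x A *)
Definition cong_alg S (A : algebra S) (alpha : A -> A -> Prop)
  (H : is_congruence alpha) : algebra S.
Proof.
refine (@Algebra S {p : A * A | alpha p.1 p.2}
  (fun f a => exist _ (interp A f (fun i => (sval (a i)).1),
                       interp A f (fun i => (sval (a i)).2)) _)).
case: H => _ _ _ Hc; apply: Hc => i; exact: (svalP (a i)).
Defined.

Definition Delta S (A : algebra S) (alpha beta : A -> A -> Prop)
  (H : is_congruence alpha) : cong_alg H -> cong_alg H -> Prop :=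
  Cg (fun p q : cong_alg H =>
        exists u v, beta u v /\ sval p = (u, u) /\ sval q = (v, v)).

Definition quot_carrier S (A : algebra S) (theta : A -> A -> Prop) :=
  {P : A -> Prop | exists a, P = theta a}.

Definition class_rep S (A : algebra S) (theta : A -> A -> Prop)
  (c : quot_carrier theta) : A :=
  proj1_sig (constructive_indefinite_description _ (proj2_sig c)).

Definition class_of S (A : algebra S) (theta : A -> A -> Prop) (a : A)
  : quot_carrier theta := exist _ (theta a) (ex_intro _ a erefl).

Definition quot_alg S (A : algebra S) (theta : A -> A -> Prop) : algebra S :=
  @Algebra S (quot_carrier theta)
    (fun f c => class_of theta (interp A f (fun i => class_rep (c i)))).

Definition is_hom S (A B : algebra S) (h : A -> B) :=
  forall (f : op S) (a : 'I_(arity f) -> A),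
    h (interp A f a) = interp B f (fun i => h (a i)).

Definition isomorphic S (A B : algebra S) :=
  exists h : A -> B, is_hom h /\ bijective h.
Arguments Delta {S A} alpha beta H _ _.
Arguments cong_alg {S A} alpha H.

From mathcomp Require Import all_boot.
From Stdlib Require Import FunctionalExtensionality ProofIrrelevance PropExtensionality ClassicalEpsilon.
Set Implicit Arguments. Unset Strict Implicit. Unset Printing Implicit Defensive.

(* Let d be a difference term and alpha a central congruence of A, [alpha,1] = 0.
   Then d(x,x,y) = y, d(x,y,y) = x on alpha-related pairs, and alpha centralizes 1
   modulo equality.  From these three facts we derive that d behaves like x - y + z
   across alpha: the maps z |-> d(y,x,z) (x alpha y) commute with the basic
   operations and compose like translations.  Consequently the relation
     (p1,p2) ~ (q1,q2)  iff  q2 = d(p2,p1,q1)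
   is a congruence of A(alpha); it coincides with Delta_{alpha 1}, and
   Delta_{alpha alpha} is its meet with the kernel of (p1,p2) |-> p1/alpha.
   Since every pair can be moved along ~ to any first coordinate, a Chinese
   remainder argument for quotients, proved first in general, yields
     A(alpha)/Delta_{alpha alpha} ~= A(alpha)/Delta_{alpha 1} x A/alpha. *)

Fixpoint term_subst S X Y (t : term S X) (s : X -> term S Y) : term S Y :=
  match t with Var x => s x | App f ts => App f (fun i => term_subst (ts i) s) end.

Lemma eval_subst S (A : algebra S) X Y (v : Y -> A) (t : term S X) s :
  eval v (term_subst t s) = eval (fun x => eval v (s x)) t.
Proof.
elim: t => [x|f ts IH] //=; congr (interp A f).
by apply: functional_extensionality => i; exact: IH.
Qed.

Section Congruences.
Variables (S : signature) (A : algebra S) (R : A -> A -> Prop).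
Hypothesis R_cong : is_congruence R.

Lemma cong_refl x : R x x.
Proof. by case: R_cong. Qed.

Lemma cong_sym x y : R x y -> R y x.
Proof. by case: R_cong => _ Hs _ _; exact: Hs. Qed.

Lemma cong_trans x y z : R x y -> R y z -> R x z.
Proof. by case: R_cong => _ _ Ht _; exact: Ht. Qed.

Lemma cong_compat f (a b : 'I_(arity f) -> A) :
  (forall i, R (a i) (b i)) -> R (interp A f a) (interp A f b).
Proof. by case: R_cong => _ _ _ Hc; exact: Hc. Qed.

Lemma eval_compat X (t : term S X) (v w : X -> A) :
  (forall x, R (v x) (w x)) -> R (eval v t) (eval w t).
Proof.
move=> Hvw; elim: t => [x|f ts IH] /=; first exact: Hvw.
by apply: cong_compat => i; exact: IH.
Qed.
End Congruences.

Lemma Cg_congruence S (A : algebra S) (X : A -> A -> Prop) : is_congruence (Cg X).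
Proof.
split.
- by move=> x R HR _; exact: cong_refl.
- by move=> x y H R HR HX; apply: (cong_sym HR); exact: H.
- by move=> x y z H1 H2 R HR HX; apply: (cong_trans HR (H1 R HR HX)); exact: H2.
- by move=> f a b H R HR HX; apply: (cong_compat HR) => i; exact: H.
Qed.

Lemma Cg_gen S (A : algebra S) (X : A -> A -> Prop) u v : X u v -> Cg X u v.
Proof. by move=> H R _ HX; exact: HX. Qed.

Lemma Cg_least S (A : algebra S) (X R : A -> A -> Prop) : is_congruence R ->
  (forall u v, X u v -> R u v) -> forall x y, Cg X x y -> R x y.
Proof. by move=> HR HX x y H; exact: H. Qed.

Section Quotients.
Variables (S : signature) (B : algebra S) (theta : B -> B -> Prop).
Hypothesis theta_cong : is_congruence theta.

Lemma class_rep_spec (c : quot_carrier theta) : sval c = theta (class_rep c).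
Proof. exact: (proj2_sig (constructive_indefinite_description _ (proj2_sig c))). Qed.

Lemma class_of_rep (c : quot_carrier theta) : class_of theta (class_rep c) = c.
Proof.
by apply: eq_sig_hprop => [? ? ?|]; [exact: proof_irrelevance | rewrite /= -class_rep_spec].
Qed.

Lemma class_of_eq x y : theta x y -> class_of theta x = class_of theta y.
Proof.
move=> Hxy; apply: eq_sig_hprop => [? ? ?|/=]; first exact: proof_irrelevance.
apply: functional_extensionality => z; apply: propositional_extensionality; split.
- by move=> Hxz; exact: (cong_trans theta_cong (cong_sym theta_cong Hxy) Hxz).
- exact: (cong_trans theta_cong Hxy).
Qed.

Lemma class_of_eq_rel x y : class_of theta x = class_of theta y -> theta x y.
Proof. by move=> /(f_equal sval) /= ->; exact: cong_refl. Qed.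

Lemma class_rep_of x : theta (class_rep (class_of theta x)) x.
Proof.
apply: (cong_sym theta_cong).
by rewrite -[theta x]/(sval (class_of theta x)) class_rep_spec; exact: cong_refl.
Qed.

Lemma class_of_hom : @is_hom S B (quot_alg theta) (class_of theta).
Proof.
move=> f a; apply: class_of_eq; apply: (cong_compat theta_cong) => i.
exact: (cong_sym theta_cong (class_rep_of _)).
Qed.
End Quotients.

Lemma quotient_meet_iso S (B C : algebra S) (theta rho : B -> B -> Prop) (pi : B -> C) :
  is_congruence theta -> is_congruence rho -> is_hom pi ->
  (forall x y, rho x y <-> theta x y /\ pi x = pi y) ->
  (forall x c, exists y, theta x y /\ pi y = c) ->
  isomorphic (quot_alg rho) (prod_alg (quot_alg theta) C).
Proof.
move=> Htheta Hrho Hpi Hmeet Hlift.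
pose h (c : quot_alg rho) : prod_alg (quot_alg theta) C :=
  (class_of theta (class_rep c), pi (class_rep c)).
have h_class x : h (class_of rho x) = (class_of theta x, pi x).
  have [Hth Hp] := proj1 (Hmeet _ _) (class_rep_of Hrho x).
  by rewrite /h (class_of_eq Htheta Hth) Hp.
pose lift x c := proj1_sig (constructive_indefinite_description _ (Hlift x c)).
have lift_spec x c : theta x (lift x c) /\ pi (lift x c) = c.
  exact: proj2_sig (constructive_indefinite_description _ (Hlift x c)).
exists h; split.
  by move=> f a; rewrite /= h_class (class_of_hom Htheta) Hpi.
exists (fun p => class_of rho (lift (class_rep p.1) p.2)).
- move=> c; rewrite -[in RHS](class_of_rep c); apply: class_of_eq => //.
  apply: (cong_sym Hrho); apply/Hmeet; have [Hth Hp] := lift_spec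
    (class_rep (class_of theta (class_rep c))) (pi (class_rep c)).
  by split=> //; exact: (cong_trans Htheta (cong_sym Htheta (class_rep_of Htheta _)) Hth).
- move=> [c1 c2]; have [Hth Hp] := lift_spec (class_rep c1) c2.
  by rewrite h_class Hp -(class_of_eq Htheta Hth) class_of_rep.
Qed.

Lemma commutator_monor S (A : algebra S) (alpha beta gamma : A -> A -> Prop) :
  (forall x y, beta x y -> gamma x y) ->
  forall x y, commutator alpha beta x y -> commutator alpha gamma x y.
Proof.
move=> Hbg x y Hc delta Hdelta Hcent; apply: Hc => // t a b c e Hab Hce.
by apply: Hcent => // j; apply: Hbg.
Qed.

Lemma central_term_condition S (A : algebra S) (alpha : A -> A -> Prop) :
  (forall x y, commutator alpha (@total_rel A) x y -> x = y) ->
  centralizes alpha (@total_rel A) (@eq A).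
Proof.
move=> Hcentral t a b c e Hab _ Hac; apply: Hcentral => delta Hdelta Hcent.
apply: (Hcent t a b c e Hab) => //; rewrite Hac; exact: cong_refl.
Qed.

Definition d3 S (A : algebra S) (d : term S nat) (x y z : A) : A := eval (asg3 x y z) d.

Definition d3_term S Y (d : term S nat) (t1 t2 t3 : term S Y) : term S Y :=
  term_subst d (fun k => match k with 0 => t1 | 1 => t2 | _ => t3 end).

Lemma eval_d3_term S (A : algebra S) Y (v : Y -> A) d t1 t2 t3 :
  eval v (d3_term d t1 t2 t3) = d3 d (eval v t1) (eval v t2) (eval v t3).
Proof.
rewrite /d3_term eval_subst /d3; congr eval.
by apply: functional_extensionality => -[|[|k]].
Qed.

Lemma d3_compat S (A : algebra S) R (HR : is_congruence R) d (x y z x' y' z' : A) :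
  R x x' -> R y y' -> R z z' -> R (d3 d x y z) (d3 d x' y' z').
Proof. by move=> Hx Hy Hz; apply: (eval_compat HR) => -[|[|k]]. Qed.

Lemma sval_eval_cong S (A : algebra S) (alpha : A -> A -> Prop) (H : is_congruence alpha)
  X (v : X -> cong_alg alpha H) (t : term S X) :
  sval (eval v t) = (eval (fun x => (sval (v x)).1) t, eval (fun x => (sval (v x)).2) t).
Proof.
elim: t => [x|f ts IH] /=; first by case: (sval (v x)).
by congr pair; congr (interp A f); apply: functional_extensionality => i; rewrite IH.
Qed.

Lemma sval_d3_cong S (A : algebra S) (alpha : A -> A -> Prop) (H : is_congruence alpha)
  d (p q r : cong_alg alpha H) :
  sval (d3 d p q r) = (d3 d (sval p).1 (sval q).1 (sval r).1, d3 d (sval p).2 (sval q).2 (sval r).2).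
Proof.
by rewrite /d3 sval_eval_cong; congr pair; congr eval; apply: functional_extensionality => -[|[|n]].
Qed.

Lemma total_rel_congruence S (A : algebra S) : is_congruence (@total_rel A).
Proof. by split. Qed.

Lemma difference_term_idl S (V : algebra S -> Prop) d (A : algebra S) :
  is_difference_term V d -> V A -> forall x y : A, d3 d x x y = y.
Proof. by move=> Hd HA x y; case: (Hd A HA _ (total_rel_congruence A) x y I). Qed.

Lemma difference_term_idr S (V : algebra S -> Prop) d (A : algebra S)
  (alpha : A -> A -> Prop) : is_difference_term V d -> V A -> is_congruence alpha ->
  (forall x y, commutator alpha (@total_rel A) x y -> x = y) ->
  forall x y, alpha x y -> d3 d x y y = x.
Proof.
move=> Hd HA Halpha Hcentral x y Hxy; apply: Hcentral.
by case: (Hd A HA _ Halpha x y Hxy) => _; exact: commutator_monor.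
Qed.

(* Extending a finite family to all of nat, and interleaving two families:
   used to name the arguments of an operation by term variables. *)
Definition ext_ord (T : Type) n (F : 'I_n -> T) (x0 : T) (k : nat) : T :=
  if (insub k : option 'I_n) is Some i then F i else x0.

Lemma ext_ord_fun (T : Type) n (F : 'I_n -> T) x0 : (fun i : 'I_n => ext_ord F x0 i) = F.
Proof. by apply: functional_extensionality => i; rewrite /ext_ord valK. Qed.

Definition interleave (T : Type) n (u v : 'I_n -> T) (x0 : T) (k : nat) : T :=
  ext_ord (if odd k then v else u) x0 k./2.

Lemma interleave_even (T : Type) n (u v : 'I_n -> T) x0 (i : 'I_n) :
  interleave u v x0 i.*2 = u i.
Proof. by rewrite /interleave odd_double doubleK /ext_ord valK. Qed.

Lemma interleave_odd (T : Type) n (u v : 'I_n -> T) x0 (i : 'I_n) :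
  interleave u v x0 i.*2.+1 = v i.
Proof. by rewrite /interleave /= odd_double uphalf_double /ext_ord valK. Qed.

Section CentralDifference.
Variables (S : signature) (A : algebra S) (alpha : A -> A -> Prop) (d : term S nat).
Hypothesis alpha_cong : is_congruence alpha.
Hypothesis d_idl : forall x y : A, d3 d x x y = y.
Hypothesis d_idr : forall x y : A, alpha x y -> d3 d x y y = x.
Hypothesis alpha_central : centralizes alpha (@total_rel A) (@eq A).

Let alpha_refl x : alpha x x := cong_refl alpha_cong x.
Local Hint Resolve alpha_refl : core.

Let d3_alpha x y z x' y' z' : alpha x x' -> alpha y y' -> alpha z z' ->
  alpha (d3 d x y z) (d3 d x' y' z').
Proof. exact: d3_compat. Qed.

(* Apply
   centrality to d(t1,t2,w) with a fresh parameter w fixed at t2(b,e). *)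
Lemma fourth_corner (t1 t2 : term S (nat + nat)) (a b c e : nat -> A) :
  (forall i, alpha (a i) (b i)) ->
  eval (sum_asg a c) t1 = eval (sum_asg a c) t2 ->
  eval (sum_asg a e) t1 = eval (sum_asg a e) t2 ->
  eval (sum_asg b c) t1 = eval (sum_asg b c) t2 ->
  alpha (eval (sum_asg b e) t1) (eval (sum_asg b e) t2) ->
  eval (sum_asg b e) t1 = eval (sum_asg b e) t2.
Proof.
move=> Hab Hac Hae Hbc Hbe.
pose shift (t : term S (nat + nat)) := term_subst t
  (fun v => Var (match v with inl i => inl i | inr j => inr j.+1 end)).
pose cons (w : A) (g : nat -> A) j := if j is j'.+1 then g j' else w.
have eval_shift t g w p : eval (sum_asg p (cons w g)) (shift t) = eval (sum_asg p g) t.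
  by rewrite eval_subst; congr eval; apply: functional_extensionality => -[].
set w := eval (sum_asg b e) t2.
have := @alpha_central (d3_term d (shift t1) (shift t2) (Var (inr 0)))
  a b (cons w c) (cons w e) Hab (fun _ => I).
rewrite !eval_d3_term !eval_shift /= Hac Hae Hbc !d_idl => /(_ erefl) Hw.
by rewrite Hw d_idr.
Qed.

(* Translations compose: d(d(b,a,c),c,k) = d(b,a,k) for a alpha b.  Rectangle
   principle for d(d(x,y,w),w,z) and d(x,y,z), moving x from a to b and w from a to c. *)
Lemma d3_translate (a b c k : A) : alpha a b -> d3 d (d3 d b a c) c k = d3 d b a k.
Proof.
move=> Hab; have Hba := cong_sym alpha_cong Hab.
pose t1 : term S (nat + nat) :=
  d3_term d (d3_term d (Var (inl 0)) (Var (inl 1)) (Var (inr 0))) (Var (inr 0)) (Var (inl 2)).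
pose t2 : term S (nat + nat) := d3_term d (Var (inl 0)) (Var (inl 1)) (Var (inl 2)).
pose abk j := match j with 0 => a | 1 => a | _ => k end.
pose bak j := match j with 0 => b | 1 => a | _ => k end.
have Hcorners : forall j, alpha (abk j) (bak j) by case=> [|[|j]].
have := @fourth_corner t1 t2 abk bak (fun _ => a) (fun _ => c) Hcorners.
rewrite /t1 /t2 !eval_d3_term /= !d_idl; apply=> //; first by rewrite d_idr.
have near_k x : alpha a x -> alpha (d3 d x a k) k.
  move=> Hx; rewrite -[X in alpha _ X](d_idl a k).
  by apply: d3_alpha => //; exact: (cong_sym alpha_cong Hx).
apply: (cong_trans alpha_cong _ (cong_sym alpha_cong (near_k _ Hab))).
rewrite -[X in alpha _ X](d_idl c k); apply: d3_alpha => //.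
by rewrite -[X in alpha _ X](d_idl a c); apply: d3_alpha.
Qed.

Definition inner_term (f : op S) : term S (nat + nat) :=
  App f (fun i => d3_term d (Var (inl (i : nat).*2)) (Var (inl (i : nat).*2.+1)) (Var (inr (i : nat)))).

Definition outer_term (f : op S) : term S (nat + nat) :=
  d3_term d (App f (fun i => Var (inl (i : nat).*2))) (App f (fun i => Var (inl (i : nat).*2.+1)))
    (App f (fun i => Var (inr (i : nat)))).

Lemma eval_inner_term f (u v w : 'I_(arity f) -> A) x0 :
  eval (sum_asg (interleave u v x0) (ext_ord w x0)) (inner_term f) =
  interp A f (fun i => d3 d (u i) (v i) (w i)).
Proof.
rewrite /=; congr (interp A f); apply: functional_extensionality => i.
by rewrite eval_d3_term /= interleave_even interleave_odd /ext_ord valK.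
Qed.

Lemma eval_outer_term f (u v w : 'I_(arity f) -> A) x0 :
  eval (sum_asg (interleave u v x0) (ext_ord w x0)) (outer_term f) =
  d3 d (interp A f u) (interp A f v) (interp A f w).
Proof.
rewrite eval_d3_term /= ext_ord_fun.
have Eu : (fun i : 'I_(arity f) => interleave u v x0 i.*2) = u.
  by apply: functional_extensionality => i; exact: interleave_even.
have Ev : (fun i : 'I_(arity f) => interleave u v x0 i.*2.+1) = v.
  by apply: functional_extensionality => i; exact: interleave_odd.
by rewrite Eu Ev.
Qed.

Lemma d3_op_commute f (x y z : 'I_(arity f) -> A) :
  (forall i, alpha (x i) (y i)) ->
  interp A f (fun i => d3 d (y i) (x i) (z i)) = d3 d (interp A f y) (interp A f x) (interp A f z).
Proof.
move=> Hxy; set x0 := interp A f x.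
have Hleft k : alpha (interleave x x x0 k) (interleave y x x0 k).
  by rewrite /interleave /ext_ord; case: (odd k) => //; case: insubP.
have corner_x w : interp A f (fun i => d3 d (x i) (x i) (w i)) = interp A f w.
  by congr (interp A f); apply: functional_extensionality => i.
have := @fourth_corner (inner_term f) (outer_term f) _ _ (ext_ord x x0) (ext_ord z x0) Hleft.
rewrite !eval_inner_term !eval_outer_term !corner_x !d_idl; apply=> //.
- rewrite d_idr; last exact: (cong_compat alpha_cong (fun i => cong_sym alpha_cong (Hxy i))).
  congr (interp A f); apply: functional_extensionality => i.
  exact/d_idr/(cong_sym alpha_cong).
- have to_z : alpha (d3 d (interp A f y) x0 (interp A f z)) (interp A f z).
    rewrite -[X in alpha _ X](d_idl x0 (interp A f z)).
    apply: d3_alpha => //; exact: (cong_sym alpha_cong (cong_compat alpha_cong Hxy)).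
  apply: (cong_trans alpha_cong _ (cong_sym alpha_cong to_z)).
  rewrite -[X in alpha _ X](corner_x z); apply: (cong_compat alpha_cong) => i.
  apply: d3_alpha => //.
  exact: (cong_sym alpha_cong (Hxy i)).
Qed.

Local Notation Aa := (cong_alg alpha alpha_cong).

Definition parallel (p q : Aa) : Prop := (sval q).2 = d3 d (sval p).2 (sval p).1 (sval q).1.

(* Reflexivity is d(p2,p1,p1) = p2, symmetry and transitivity are instances of
   d3_translate, and compatibility is d3_op_commute. *)
Lemma parallel_congruence : is_congruence parallel.
Proof.
split.
- by move=> p; rewrite /parallel d_idr //; exact: (cong_sym alpha_cong (svalP p)).
- move=> p q; rewrite /parallel => ->.
  rewrite d3_translate; last exact: (svalP p).
  by rewrite d_idr //; exact: (cong_sym alpha_cong (svalP p)).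
- move=> p q r; rewrite /parallel => Hq ->.
  by rewrite Hq d3_translate //; exact: (svalP p).
- move=> f a b Hab; rewrite /parallel /=.
  have -> : (fun i => (sval (b i)).2) =
      (fun i => d3 d (sval (a i)).2 (sval (a i)).1 (sval (b i)).1).
    by apply: functional_extensionality => i; exact: Hab.
  by apply: d3_op_commute => i; exact: (svalP (a i)).
Qed.

Definition diag (x : A) : Aa := exist _ (x, x) (cong_refl alpha_cong x).

Lemma parallel_at_rel (p : Aa) k : alpha k (d3 d (sval p).2 (sval p).1 k).
Proof.
rewrite -[X in alpha X _](d_idl (sval p).1 k).
by apply: d3_alpha => //; exact: (svalP p).
Qed.

Definition parallel_at (p : Aa) (k : A) : Aa :=
  exist _ (k, d3 d (sval p).2 (sval p).1 k) (parallel_at_rel p k).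

(* Any congruence of A(alpha) relating the diagonal points over p1 and k relates
   p to its translate over k: apply d(p, -, -) to (p1,p1) and (k,k). *)
Lemma congruence_parallel_at (theta : Aa -> Aa -> Prop) (p : Aa) k :
  is_congruence theta -> theta (diag (sval p).1) (diag k) -> theta p (parallel_at p k).
Proof.
move=> Htheta Hk.
have Hp : d3 d p (diag (sval p).1) (diag (sval p).1) = p.
  apply: eq_sig_hprop => [? ? ?|]; first exact: proof_irrelevance.
  rewrite sval_d3_cong /= d_idl d_idr; first by case: (sval p).
  exact: (cong_sym alpha_cong (svalP p)).
have Hpk : d3 d p (diag (sval p).1) (diag k) = parallel_at p k.
  apply: eq_sig_hprop => [? ? ?|]; first exact: proof_irrelevance.
  by rewrite sval_d3_cong /= d_idl.
by rewrite -{1}Hp -Hpk; apply: d3_compat => //; exact: cong_refl.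
Qed.

Lemma Delta_total_parallel p q : Delta alpha (@total_rel A) alpha_cong p q -> parallel p q.
Proof.
apply: (Cg_least parallel_congruence) => {}p {}q [u [v [_ [Ep Eq]]]].
by rewrite /parallel Ep Eq /= d_idl.
Qed.

Lemma Delta_total_parallel_at p k : Delta alpha (@total_rel A) alpha_cong p (parallel_at p k).
Proof.
by apply: (congruence_parallel_at (Cg_congruence _)); apply: Cg_gen; exists (sval p).1, k.
Qed.

Lemma Delta_alpha_meet p q : Delta alpha alpha alpha_cong p q <->
  Delta alpha (@total_rel A) alpha_cong p q /\ alpha (sval p).1 (sval q).1.
Proof.
split.
- move=> Hpq; split.
    apply: (Cg_least (Cg_congruence _) _ Hpq) => r s [u [v [_ [Er Es]]]].
    by apply: Cg_gen; exists u, v.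
  have Hfst : is_congruence (fun p q : Aa => alpha (sval p).1 (sval q).1).
    split=> [r|r s|r s t|g a b Hab] /=; first exact: alpha_refl.
    - exact: (cong_sym alpha_cong).
    - exact: (cong_trans alpha_cong).
    - exact: (cong_compat alpha_cong Hab).
  by apply: (Cg_least Hfst _ Hpq) => r s [u [v [Huv [Er Es]]]] /=; rewrite Er Es.
- move=> [/Delta_total_parallel Hpar Hfst].
  have -> : q = parallel_at p (sval q).1.
    apply: eq_sig_hprop => [? ? ?|]; first exact: proof_irrelevance.
    by rewrite /= -Hpar; case: (sval q).
  apply: (congruence_parallel_at (Cg_congruence _)); apply: Cg_gen.
  by exists (sval p).1, (sval q).1.
Qed.
End CentralDifference.

Lemma fst_class_hom S (A : algebra S) (alpha : A -> A -> Prop) (H : is_congruence alpha) :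
  @is_hom S (cong_alg alpha H) (quot_alg alpha) (fun p => class_of alpha (sval p).1).
Proof. by move=> f a; rewrite /= (class_of_hom H). Qed.

Theorem lemma3 (S : signature) (V : algebra S -> Prop)
  (HV : is_variety V)
  (Hd : exists d : term S nat, is_difference_term V d)
  (A : algebra S) (HA : V A)
  (alpha : A -> A -> Prop) (Halpha : is_congruence alpha)
  (Hcentral : forall x y : A, commutator alpha (@total_rel A) x y -> x = y) :
  isomorphic (quot_alg (Delta alpha alpha Halpha))
    (prod_alg (quot_alg (Delta alpha (@total_rel A) Halpha)) (quot_alg alpha)).
Proof.
have [d Hdd] := Hd.
have d_idl := difference_term_idl Hdd HA.
have d_idr := difference_term_idr Hdd HA Halpha Hcentral.
have Hcen := central_term_condition Hcentral.
apply: quotient_meet_iso; try exact: Cg_congruence; first exact: fst_class_hom.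
- move=> p q; rewrite (Delta_alpha_meet d_idl d_idr Hcen).
  split=> -[Hpq Hfst]; split=> //; first exact: (class_of_eq Halpha).
  exact: (class_of_eq_rel Halpha Hfst).
- move=> p c; exists (parallel_at d_idl p (class_rep c)); split.
    exact: Delta_total_parallel_at.
  exact: class_of_rep.
Qed.
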